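(* Let $m\ge2$, $n\ge1$ with $m(n-1)$ even, let $\mathcal{H}$ be the real $m^{\rm th}$-order $n$-dimensional Hankel tensor generated by ${\bf h}\in\mathbb{R}^{m(n-1)+1}$, and let $H$ be its associated Hankel matrix. Define the positive constant $c$ (depending on $m,n$) by $c=\min_{0\ne{\bf y}\in\mathbb{R}^n}\|{\bf y}^{\ast\frac m2}\|_2^2/\|{\bf y}\|_m^m$ if $m$ is even, and $c=\min_{0\ne{\bf y}\in\mathbb{R}^n}\|{\bf y}^{\ast\frac{m-1}2}\|_2^2/\|{\bf y}\|_{m-1}^{m-1}$ if $m$ is odd. If $H$ is positive semi-definite, then every H-eigenvalue $\lambda$ of $\mathcal{H}$ satisfies $\lambda\ge c\,\lambda_{\min}(H)$ (i.e. $\lambda_{\min}(\mathcal{H})\ge c\,\lambda_{\min}(H)$). If $H$ is negative semi-definite, then every H-eigenvalue $\lambda$ of $\mathcal{H}$ satisfies $\lambda\le c\,\lambda_{\max}(H)$ (i.e. $\lambda_{\max}(\mathcal{H})\le c\,\lambda_{\max}(H)$).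
   Context: The Hankel tensor generated by ${\bf h}=(h_0,\dots,h_{m(n-1)})$ has entries $\mathcal{H}_{i_1\dots i_m}=h_{i_1+\dots+i_m}$, $0\le i_j\le n-1$; its associated Hankel matrix is $H$ with $H_{ij}=h_{i+j}$, $0\le i,j\le m(n-1)/2$; $\lambda_{\min}(H),\lambda_{\max}(H)$ are its extreme eigenvalues. Convolution: for ${\bf u}\in\mathbb{R}^{n_1},{\bf v}\in\mathbb{R}^{n_2}$ (indexed from $0$), $({\bf u}\ast{\bf v})_j=\sum_{i=0}^j u_iv_{j-i}$ with out-of-range entries zero, and ${\bf y}^{\ast p}$ is the $p$-fold convolution of ${\bf y}$ with itself. A real $\lambda$ is an H-eigenvalue of $\mathcal{H}$ if there is nonzero ${\bf x}\in\mathbb{R}^n$ with $\mathcal{H}{\bf x}^{m-1}=\lambda{\bf x}^{[m-1]}$, where $(\mathcal{H}{\bf x}^{m-1})_i=\sum_{i_2,\dots,i_m}\mathcal{H}_{ii_2\dots i_m}x_{i_2}\cdots x_{i_m}$ and ${\bf x}^{[m-1]}=(x_i^{m-1})_i$; $\lambda_{\min}(\mathcal{H}),\lambda_{\max}(\mathcal{H})$ are the smallest and largest H-eigenvalues (when they exist). $\|\cdot\|_p$ is the $\ell_p$-norm. *)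

From HB Require Import structures.
From mathcomp Require Import all_boot all_order all_algebra.
From mathcomp Require Import reals.
Set Implicit Arguments. Unset Strict Implicit. Unset Printing Implicit Defensive.
Import Order.TTheory GRing.Theory Num.Theory.
Local Open Scope ring_scope.

Section Hankel.
Variable R : realType.

Definition hget (m n : nat) (h : 'rV[R]_(m * (n - 1)).+1) (k : nat) : R :=
  h 0 (inord k).

(* (H x^{m-1})_i = sum_{i_2..i_m} h_{i+i_2+...+i_m} x_{i_2} ... x_{i_m} *)
Definition hankel_tensor_apply (m n : nat) (h : 'rV[R]_(m * (n - 1)).+1)
  (x : 'rV[R]_n) (i : 'I_n) : R :=
  \sum_(t : (m.-1).-tuple 'I_n)
     hget h (i + \sum_(j <- t) nat_of_ord j)%N * \prod_(j <- t) x 0 j.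

Definition H_eigenvalue (m n : nat) (h : 'rV[R]_(m * (n - 1)).+1) (lam : R) : Prop :=
  exists x : 'rV[R]_n, x != 0 /\
    forall i : 'I_n, hankel_tensor_apply h x i = lam * x 0 i ^+ (m.-1).

Definition hankel_mx (m n : nat) (h : 'rV[R]_(m * (n - 1)).+1)
  : 'M[R]_((m * (n - 1))./2.+1) :=
  \matrix_(i, j) hget h (i + j)%N.

Definition psd (N : nat) (A : 'M[R]_N) : Prop :=
  forall x : 'cV[R]_N, 0 <= (x^T *m A *m x) 0 0.
Definition nsd (N : nat) (A : 'M[R]_N) : Prop :=
  forall x : 'cV[R]_N, (x^T *m A *m x) 0 0 <= 0.

Definition is_lambda_min (N : nat) (A : 'M[R]_N) (l : R) : Prop :=
  eigenvalue A l /\ forall a, eigenvalue A a -> l <= a.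
Definition is_lambda_max (N : nat) (A : 'M[R]_N) (l : R) : Prop :=
  eigenvalue A l /\ forall a, eigenvalue A a -> a <= l.

Definition conv (u v : seq R) : seq R :=
  mkseq (fun j => \sum_(i < j.+1) u`_i * v`_(j - i)) (size u + size v).-1.

(* p-fold convolution of y with itself (p >= 1) *)
Definition convpow (y : seq R) (p : nat) : seq R := iter p.-1 (conv y) y.

Definition norm2sq (s : seq R) : R := \sum_(a <- s) a ^+ 2.

Definition normpow (n : nat) (y : 'rV[R]_n) (q : nat) : R :=
  \sum_(i < n) `|y 0 i| ^+ q.

Definition vseq (n : nat) (y : 'rV[R]_n) : seq R := [seq y 0 i | i <- enum 'I_n].

Definition c_ratio (m n : nat) (y : 'rV[R]_n) : R :=
  if ~~ odd m then norm2sq (convpow (vseq y) (m %/ 2)) / normpow y m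
  else norm2sq (convpow (vseq y) ((m - 1) %/ 2)) / normpow y (m - 1).

Definition is_hankel_const (m n : nat) (c : R) : Prop :=
  (exists2 y : 'rV[R]_n, y != 0 & c_ratio m y = c) /\
  (forall y : 'rV[R]_n, y != 0 -> c <= c_ratio m y).

End Hankel.

(* With y = x^{*q} the q-fold self-convolution of x, multilinear Hankel sums factor as
   sum_{|t| = 2q} h_{i + sum t} x_t = (S^a y)^T H (S^b y) for i = a + b, where S is the
   shift; and lambda_min(H) |v|^2 <= v^T H v since the infimum of the Rayleigh quotient
   of a symmetric matrix is an eigenvalue.
   For even m = 2q: lam |x|_m^m = x . H x^{m-1} = y^T H y >= lambda_min |y|^2
   >= c lambda_min |x|_m^m.  For odd m = 2q + 1 (so n - 1 is even): at an even index
   i = 2a with x_i <> 0 the same chain gives lam x_i^{2q} >= c lambda_min x_i^{2q}; if all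
   even coordinates vanish, S^a y is isotropic and Cauchy-Schwarz forces lam = 0, while
   the isotropic S^0 y <> 0 forces lambda_min <= 0.  The negative semidefinite case is
   the positive one for -h. *)

From HB Require Import structures.
From mathcomp Require Import all_boot all_order all_algebra.
From mathcomp Require Import reals classical_sets.
From mathcomp Require Import ring lra zify.
Import Order.TTheory GRing.Theory Num.Theory.
Set Implicit Arguments. Unset Strict Implicit. Unset Printing Implicit Defensive.
Local Open Scope ring_scope.

Lemma quadratic_ge0_discriminant (R : realFieldType) (a b c : R) : 0 <= c ->
  (forall t, 0 <= a + 2 * t * b + t ^+ 2 * c) -> b ^+ 2 <= a * c.
Proof.
move=> c_ge0 nonneg; have [c_gt0|c_le0] := ltrP 0 c.
  pose t := - b / c; have tc : t * c = - b by rewrite /t mulrVK ?unitfE ?gt_eqF.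
  have : 0 <= (a + 2 * t * b + t ^+ 2 * c) * c by rewrite mulr_ge0 ?nonneg ?ltW.
  have -> : (a + 2 * t * b + t ^+ 2 * c) * c = a * c + 2 * (t * c) * b + (t * c) ^+ 2.
    by ring.
  rewrite tc; nra.
have c0 : c = 0 by apply/eqP; rewrite eq_le c_le0 c_ge0.
rewrite c0 in nonneg *.
have [->|b_neq0] := eqVneq b 0; first lra.
have := nonneg (- (a + 1) / (2 * b)); rewrite mulr0 addr0.
have -> : 2 * (- (a + 1) / (2 * b)) * b = - (a + 1) by field.
lra.
Qed.

Section QuadraticForm.
Variable R : realType.

Definition bform N (A : 'M[R]_N) (u w : 'cV[R]_N) : R := (u^T *m A *m w) 0 0.

Definition sqnorm N (v : 'cV[R]_N) : R := (v^T *m v) 0 0.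

Definition mx_abs_sum N (A : 'M[R]_N) : R := \sum_i \sum_j `|A i j|.

Lemma bformC N (A : 'M[R]_N) u w : A^T = A -> bform A w u = bform A u w.
Proof.
move=> sA; rewrite /bform -[in LHS](trmxK (w^T *m A *m u)) mxE.
by rewrite !trmx_mul trmxK sA mulmxA.
Qed.

Lemma bformE N (A : 'M[R]_N) u w : bform A u w = \sum_i \sum_j u i 0 * A i j * w j 0.
Proof.
rewrite /bform mxE exchange_big; apply: eq_bigr => j _; rewrite mxE mulr_suml.
by apply: eq_bigr => i _; rewrite mxE.
Qed.

Lemma bformDZ N (A : 'M[R]_N) u w t : A^T = A ->
  bform A (u + t *: w) (u + t *: w) =
  bform A u u + 2 * t * bform A u w + t ^+ 2 * bform A w w.
Proof.
move=> sA; have := bformC u w sA; rewrite /bform; set ut := (u + t *: w)^T.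
have -> : ut = u^T + t *: w^T by rewrite /ut linearD linearZ.
by rewrite !mulmxDl !mulmxDr -!scalemxAl -!scalemxAr !mxE => ->; ring.
Qed.

Lemma psd_cauchy_schwarz N (A : 'M[R]_N) u w : A^T = A -> psd A ->
  bform A u w ^+ 2 <= bform A u u * bform A w w.
Proof.
move=> sA pA; apply: quadratic_ge0_discriminant => [|t]; first exact: pA.
rewrite -bformDZ //; exact: pA.
Qed.

Lemma sqnormE N (v : 'cV[R]_N) : sqnorm v = \sum_i v i 0 ^+ 2.
Proof. by rewrite /sqnorm mxE; apply: eq_bigr => i _; rewrite mxE expr2. Qed.

Lemma sqr_coord_le_sqnorm N (v : 'cV[R]_N) i : v i 0 ^+ 2 <= sqnorm v.
Proof. by rewrite sqnormE (bigD1 i) //= lerDl sumr_ge0 // => k _; rewrite sqr_ge0. Qed.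

Lemma sqnorm_ge0 N (v : 'cV[R]_N) : 0 <= sqnorm v.
Proof. by rewrite sqnormE sumr_ge0 // => i _; rewrite sqr_ge0. Qed.

Lemma sqnorm_gt0 N (v : 'cV[R]_N) : v != 0 -> 0 < sqnorm v.
Proof.
apply: contraNT; rewrite -leNgt => v_le0; apply/eqP/matrixP => i j.
rewrite (ord1 j) mxE; apply/eqP; rewrite -sqrf_eq0 eq_le sqr_ge0 andbT.
exact: le_trans (sqr_coord_le_sqnorm v i) v_le0.
Qed.

Lemma abs_mul_coord_le_sqnorm N (v : 'cV[R]_N) i j : `|v i 0 * v j 0| <= sqnorm v.
Proof.
have := sqr_coord_le_sqnorm v i; have := sqr_coord_le_sqnorm v j.
rewrite normrM -(real_normK (num_real (v i 0))) -(real_normK (num_real (v j 0))).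
have := normr_ge0 (v i 0); have := normr_ge0 (v j 0).
have [|] := lerP `|v i 0| `|v j 0|; nra.
Qed.

Lemma mx_abs_sum_ge0 N (A : 'M[R]_N) : 0 <= mx_abs_sum A.
Proof. by rewrite sumr_ge0 // => i _; rewrite sumr_ge0. Qed.

Lemma abs_bform_le N (A : 'M[R]_N) v : `|bform A v v| <= mx_abs_sum A * sqnorm v.
Proof.
rewrite bformE mulr_suml; apply: (le_trans (ler_norm_sum _ _ _)).
apply: ler_sum => i _; rewrite mulr_suml; apply: (le_trans (ler_norm_sum _ _ _)).
apply: ler_sum => j _; rewrite mulrAC mulrC normrM.
by rewrite ler_wpM2l // abs_mul_coord_le_sqnorm.
Qed.

Lemma bform_le N (A : 'M[R]_N) v : bform A v v <= mx_abs_sum A * sqnorm v.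
Proof. exact: le_trans (real_ler_norm (num_real _)) (abs_bform_le A v). Qed.

(* Cauchy-Schwarz for the pair [B v], [v], whose [B]-product is [sqnorm (B v)]. *)
Lemma psd_sqnorm_mul_le N (B : 'M[R]_N) v : B^T = B -> psd B ->
  sqnorm (B *m v) <= mx_abs_sum B * bform B v v.
Proof.
move=> sB pB; set w := B *m v.
have wv : bform B w v = sqnorm w by rewrite /bform /sqnorm -mulmxA.
have := psd_cauchy_schwarz w v sB pB; rewrite wv => cs.
have w_le : sqnorm w ^+ 2 <= mx_abs_sum B * sqnorm w * bform B v v.
  by apply: le_trans cs _; rewrite ler_wpM2r ?bform_le ?pB.
have [w_gt0|w_le0] := ltrP 0 (sqnorm w).
  rewrite -(ler_pM2l w_gt0) -expr2; apply: le_trans w_le _.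
  by rewrite -mulrA mulrCA.
by apply: le_trans w_le0 _; rewrite mulr_ge0 ?mx_abs_sum_ge0 ?pB.
Qed.

Lemma psd_unitmx_coercive N (B : 'M[R]_N) : B^T = B -> psd B -> B \in unitmx ->
  exists2 e, 0 < e & forall v, e * sqnorm v <= bform B v v.
Proof.
move=> sB pB uB; pose M := invmx B.
pose K := mx_abs_sum (M^T *m M) * mx_abs_sum B.
have K_ge0 : 0 <= K by rewrite mulr_ge0 ?mx_abs_sum_ge0.
exists (K + 1)^-1; first by rewrite invr_gt0 ltr_wpDl.
move=> v; rewrite ler_pdivrMl ?ltr_wpDl //.
have -> : sqnorm v = bform (M^T *m M) (B *m v) (B *m v).
  by rewrite /sqnorm /bform -[in LHS](mulKmx uB v) trmx_mul !mulmxA.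
apply: le_trans (bform_le _ _) _.
apply: le_trans (ler_wpM2l (mx_abs_sum_ge0 _) (psd_sqnorm_mul_le v sB pB)) _.
by rewrite mulrA ler_wpM2r ?lerDl ?pB.
Qed.

Lemma bform_subr_scalar N (A : 'M[R]_N) l v :
  bform (A - l%:M) v v = bform A v v - l * sqnorm v.
Proof.
rewrite /bform /sqnorm mulmxBr mulmxBl !mxE mul_mx_scalar; congr (_ - _).
by rewrite mulr_sumr; apply: eq_bigr => j _; rewrite !mxE mulrA.
Qed.

(* The infimum of the Rayleigh quotient is an eigenvalue: otherwise [A - l] would
   be positive semidefinite and invertible, hence coercive, contradicting minimality. *)
Lemma symmetric_eigenvalue_rayleigh N (A : 'M[R]_N.+1) : A^T = A ->
  exists2 l, eigenvalue A l & forall v, l * sqnorm v <= bform A v v.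
Proof.
move=> sA.
pose S := [set r : R | exists2 v : 'cV[R]_N.+1, v != 0 & r = bform A v v / sqnorm v]%classic.
have S_lb r : S r -> - mx_abs_sum A <= r.
  case=> v v_neq0 ->; rewrite ler_pdivlMr ?sqnorm_gt0 // mulNr lerNl.
  by apply: le_trans (abs_bform_le A v); rewrite -normrN ler_norm.
have S_inf : has_inf S.
  split; last by exists (- mx_abs_sum A) => r /S_lb.
  pose one : 'cV[R]_N.+1 := const_mx 1.
  have one_neq0 : one != 0 by apply/eqP => /matrixP/(_ 0 0); rewrite !mxE; apply/eqP/oner_neq0.
  by exists (bform A one one / sqnorm one), one.
pose l := inf S.
have l_le v : l * sqnorm v <= bform A v v.
  have [->|v_neq0] := eqVneq v 0; first by rewrite /sqnorm /bform trmx0 !mul0mx mxE mulr0.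
  by rewrite -ler_pdivlMr ?sqnorm_gt0 //; apply: (ge_inf S_inf.2); exists v.
exists l => //; apply: contraT; rewrite /eigenvalue negbK => /eqP ker0.
have uB : A - l%:M \in unitmx by rewrite -row_free_unit -kermx_eq0; apply/eqP.
have sB : (A - l%:M)^T = A - l%:M by rewrite linearB /= tr_scalar_mx sA.
have pB : psd (A - l%:M) by move=> v; rewrite -/(bform _ v v) bform_subr_scalar subr_ge0.
have [e e_gt0 coercive] := psd_unitmx_coercive sB pB uB.
have [_ [v v_neq0 ->]] := inf_adherent e_gt0 S_inf.
rewrite ltr_pdivrMr ?sqnorm_gt0 // -/l mulrDl ltNge.
by rewrite addrC -lerBrDr -bform_subr_scalar coercive.
Qed.

End QuadraticForm.

Section TupleSums.
Variable V : nmodType.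

Lemma sum_tuple0 n (F : seq 'I_n -> V) : \sum_(t : 0.-tuple 'I_n) F t = F [::].
Proof.
rewrite (eq_bigr (fun _ => F [::])) => [|t _]; last by rewrite tuple0.
by rewrite sumr_const card_tuple expn0.
Qed.

Lemma sum_tuple_cons n p (F : seq 'I_n -> V) :
  \sum_(t : p.+1.-tuple 'I_n) F t = \sum_(i < n) \sum_(t : p.-tuple 'I_n) F (i :: t).
Proof.
rewrite pair_big /= (reindex (fun it : 'I_n * p.-tuple 'I_n => [tuple of it.1 :: it.2])) //=.
apply: onW_bij; exists (fun t : p.+1.-tuple 'I_n => (thead t, [tuple of behead t])).
  by case=> i t /=; rewrite theadE; congr (_, _); apply: val_inj.
by move=> t; rewrite [in RHS](tuple_eta t).
Qed.

Lemma sum_tuple_cat n a b (F : seq 'I_n -> V) :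
  \sum_(t : (a + b).-tuple 'I_n) F t =
  \sum_(t1 : a.-tuple 'I_n) \sum_(t2 : b.-tuple 'I_n) F (t1 ++ t2).
Proof.
elim: a F => [|a IH] F.
  by rewrite (sum_tuple0 (fun s => \sum_(t2 : b.-tuple 'I_n) F (s ++ t2))).
rewrite [LHS](@sum_tuple_cons n (a + b)).
rewrite (@sum_tuple_cons n a (fun s => \sum_(t2 : b.-tuple 'I_n) F (s ++ t2))).
by apply: eq_bigr => i _; rewrite (IH (fun s => F (i :: s))).
Qed.

End TupleSums.

Section Convolution.
Variable R : realType.

Lemma size_conv (u v : seq R) : size (conv u v) = (size u + size v).-1.
Proof. exact: size_mkseq. Qed.

Lemma Poly_conv (u v : seq R) : Poly (conv u v) = Poly u * Poly v.
Proof.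
apply/polyP => k; rewrite coef_Poly.
have [k_lt|k_ge] := ltnP k (size (conv u v)).
  rewrite nth_mkseq -?size_conv // coefM.
  by apply: eq_bigr => i _; rewrite !coef_Poly.
rewrite nth_default // nth_default //; apply: leq_trans (size_polyMleq _ _) _.
by apply: leq_trans k_ge; rewrite size_conv -!subn1 leq_sub2r // leq_add // size_Poly.
Qed.

Lemma Poly_convpow (s : seq R) p : Poly (convpow s p.+1) = Poly s ^+ p.+1.
Proof.
elim: p => [|p IH]; first by rewrite expr1.
by rewrite exprS -IH -Poly_conv.
Qed.

Lemma norm2sq_ge0 (s : seq R) : 0 <= norm2sq s.
Proof. by rewrite sumr_ge0 // => a _; rewrite sqr_ge0. Qed.

Lemma norm2sq_gt0 (s : seq R) : Poly s != 0 -> 0 < norm2sq s.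
Proof.
move=> s_neq0; have lead_neq0 : s`_(size (Poly s)).-1 != 0.
  by rewrite -coef_Poly -lead_coefE lead_coef_eq0.
have k_lt : ((size (Poly s)).-1 < size s)%N.
  by rewrite ltnNge; apply: contra lead_neq0 => k_ge; rewrite nth_default.
rewrite /norm2sq (big_nth 0) big_mkord (bigD1 (Ordinal k_lt)) //=.
by rewrite ltr_pwDl ?exprn_even_gt0 // sumr_ge0 // => j _; rewrite sqr_ge0.
Qed.

Lemma sum_conv (u v : seq R) (f : nat -> R) : (0 < size v)%N ->
  \sum_(k < size (conv u v)) f k * (conv u v)`_k =
  \sum_(i < size u) \sum_(l < size v) f (i + l)%N * (u`_i * v`_l).
Proof.
move=> v_gt0; set K := size (conv u v); have eK : K = (size u + size v).-1 by exact: size_conv.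
transitivity (\sum_(k < K) \sum_(i < K) (if (i <= k)%N then f k * (u`_i * v`_(k - i)) else 0)).
  apply: eq_bigr => k _; rewrite nth_mkseq -?eK // mulr_sumr.
  by rewrite (big_ord_widen K (fun i => f k * (u`_i * v`_(k - i)))) ?big_mkcond.
rewrite exchange_big.
rewrite (big_ord_widen K (fun i => \sum_(l < size v) f (i + l)%N * (u`_i * v`_l))); last by lia.
rewrite [RHS]big_mkcond; apply: eq_bigr => i _.
case: ltnP => i_lt; last first.
  by apply: big1 => k _; rewrite nth_default // mul0r mulr0 if_same.
rewrite -(big_mkord xpredT (fun k => if (i <= k)%N then f k * (u`_i * v`_(k - i)) else 0)).
rewrite (@big_cat_nat _ _ _ i) //=; last by lia.
rewrite big1_seq ?add0r; last first.
  by move=> k /andP[_]; rewrite mem_index_iota => /andP[_ ki]; rewrite leqNgt ki.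
rewrite -{1}(add0n i) big_addn (@big_cat_nat _ _ _ (size v)) //=; last by lia.
rewrite [X in _ + X]big1_seq ?addr0; last first.
  move=> k /andP[_]; rewrite mem_index_iota => /andP[kv _].
  by rewrite leq_addl addnK (nth_default _ kv) !mulr0.
by rewrite big_mkord; apply: eq_bigr => l _; rewrite leq_addl addnK addnC.
Qed.

End Convolution.

Section ConvolutionPowers.
Variables (R : realType) (n : nat) (x : 'rV[R]_n.+1).

Definition ord_sum (s : seq 'I_n.+1) : nat := (\sum_(j <- s) nat_of_ord j)%N.
Definition coord_prod (s : seq 'I_n.+1) : R := \prod_(j <- s) x 0 j.

Local Notation y p := (convpow (vseq x) p.+1).

Lemma size_vseq : size (vseq x) = n.+1.
Proof. by rewrite size_map size_enum_ord. Qed.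

Lemma nth_vseq (i : 'I_n.+1) : (vseq x)`_i = x 0 i.
Proof. by rewrite (nth_map i) ?size_enum_ord // nth_ord_enum. Qed.

Lemma Poly_vseq_neq0 : x != 0 -> Poly (vseq x) != 0.
Proof.
apply: contraNneq => /polyP P0; apply/eqP/matrixP => i j; rewrite (ord1 i) mxE.
by have := P0 j; rewrite coef_Poly coef0 nth_vseq.
Qed.

Lemma size_convpow p : size (y p) = (p.+1 * n).+1.
Proof.
elim: p => [|p IH]; first by rewrite size_vseq mul1n.
by rewrite [convpow _ _]/= size_conv -/(y p) IH size_vseq; lia.
Qed.

Lemma norm2sq_convpow_gt0 p : x != 0 -> 0 < norm2sq (y p).
Proof.
by move=> x_neq0; rewrite norm2sq_gt0 // Poly_convpow expf_neq0 // Poly_vseq_neq0.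
Qed.

Lemma sum_convpow p (f : nat -> R) :
  \sum_(k < (p.+1 * n).+1) f k * (y p)`_k =
  \sum_(t : p.+1.-tuple 'I_n.+1) f (ord_sum t) * coord_prod t.
Proof.
elim: p f => [|p IH] f; rewrite (@sum_tuple_cons _ n.+1 _ (fun s => f (ord_sum s) * coord_prod s)).
  rewrite mul1n; apply: eq_bigr => i _.
  rewrite (sum_tuple0 (fun s => f (ord_sum (i :: s)) * coord_prod (i :: s))).
  by rewrite /ord_sum /coord_prod !big_cons !big_nil addn0 mulr1 nth_vseq.
rewrite -[in LHS](size_convpow p.+1) [convpow _ _]/= sum_conv ?size_convpow // size_vseq.
apply: eq_bigr => i _.
transitivity ((vseq x)`_i * \sum_(l < (p.+1 * n).+1) f (i + l)%N * (y p)`_l).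
  by rewrite mulr_sumr; apply: eq_bigr => l _; ring.
rewrite (IH (fun l => f (i + l)%N)) mulr_sumr nth_vseq; apply: eq_bigr => t _.
by rewrite /ord_sum /coord_prod !big_cons; ring.
Qed.

Lemma sum_tuple_convpow2 a b (g : nat -> R) :
  \sum_(t : (a.+1 + b.+1).-tuple 'I_n.+1) g (ord_sum t) * coord_prod t =
  \sum_(j < (a.+1 * n).+1) \sum_(l < (b.+1 * n).+1) g (j + l)%N * ((y a)`_j * (y b)`_l).
Proof.
rewrite (@sum_tuple_cat _ n.+1 a.+1 b.+1 (fun s => g (ord_sum s) * coord_prod s)).
transitivity (\sum_(t2 : b.+1.-tuple 'I_n.+1) coord_prod t2 *
   \sum_(t1 : a.+1.-tuple 'I_n.+1) g (ord_sum t1 + ord_sum t2)%N * coord_prod t1).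
  rewrite exchange_big; apply: eq_bigr => t2 _; rewrite mulr_sumr.
  by apply: eq_bigr => t1 _; rewrite /ord_sum /coord_prod !big_cat /=; ring.
under eq_bigr do rewrite -(sum_convpow a (fun j => g (j + _)%N)) mulr_sumr.
rewrite exchange_big; apply: eq_bigr => j _.
transitivity ((y a)`_j * \sum_(t : b.+1.-tuple 'I_n.+1) g (j + ord_sum t)%N * coord_prod t).
  by rewrite mulr_sumr; apply: eq_bigr => t _; ring.
rewrite -(sum_convpow b (fun l => g (j + l)%N)) mulr_sumr.
by apply: eq_bigr => l _; ring.
Qed.

End ConvolutionPowers.

Section ShiftedColumns.
Variable R : realType.

Definition shift_col N a (y : seq R) : 'cV[R]_N :=
  \col_(r < N) (if (a <= r)%N then y`_(r - a) else 0).

Lemma sum_shift_col N a L (y : seq R) (Z : nat -> R) : (a + L.+1 <= N)%N -> size y = L.+1 ->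
  \sum_(r < N) (if (a <= r)%N then y`_(r - a) else 0) * Z r = \sum_(j < L.+1) y`_j * Z (j + a)%N.
Proof.
move=> aL_le sy.
rewrite -(big_mkord xpredT (fun r => (if (a <= r)%N then y`_(r - a) else 0) * Z r)).
rewrite (@big_cat_nat _ _ _ a) //=; last by lia.
rewrite big1_seq ?add0r; last first.
  by move=> k /andP[_]; rewrite mem_index_iota => /andP[_ ka]; rewrite leqNgt ka mul0r.
rewrite -{1}(add0n a) big_addn (@big_cat_nat _ _ _ L.+1) //=; last by lia.
rewrite [X in _ + X]big1_seq ?addr0; last first.
  move=> k /andP[_]; rewrite mem_index_iota => /andP[kL _].
  by rewrite leq_addl addnK nth_default ?mul0r // sy.
by rewrite big_mkord; apply: eq_bigr => l _; rewrite leq_addl addnK.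
Qed.

Lemma sqnorm_shift_col N a L (y : seq R) : (a + L.+1 <= N)%N -> size y = L.+1 ->
  sqnorm (shift_col N a y) = norm2sq y.
Proof.
move=> aL_le sy; rewrite sqnormE.
transitivity (\sum_(r < N) (if (a <= r)%N then y`_(r - a) else 0) *
                           (if (a <= r)%N then y`_(r - a) else 0)).
  by apply: eq_bigr => r _; rewrite expr2 mxE.
rewrite (sum_shift_col (fun r => if (a <= r)%N then y`_(r - a) else 0) aL_le sy).
rewrite /norm2sq [RHS](big_nth 0) sy big_mkord.
by apply: eq_bigr => j _; rewrite leq_addl addnK expr2.
Qed.

Lemma bform_hankel_shift_col N (A : 'M[R]_N) (g : nat -> R) a b L (y : seq R) :
  (forall r r' : 'I_N, A r r' = g (r + r')%N) ->
  (a + L.+1 <= N)%N -> (b + L.+1 <= N)%N -> size y = L.+1 ->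
  bform A (shift_col N a y) (shift_col N b y) =
  \sum_(j < L.+1) \sum_(l < L.+1) g (a + b + (j + l))%N * (y`_j * y`_l).
Proof.
move=> hankelA aL_le bL_le sy; rewrite bformE.
transitivity (\sum_(r < N) (if (a <= r)%N then y`_(r - a) else 0) *
   \sum_(l < L.+1) y`_l * g (r + (l + b))%N).
  apply: eq_bigr => r _.
  rewrite -(sum_shift_col (fun r' => g (r + r')%N) bL_le sy) mulr_sumr.
  by apply: eq_bigr => r' _; rewrite !mxE hankelA; ring.
rewrite (sum_shift_col (fun r => \sum_(l < L.+1) y`_l * g (r + (l + b))%N) aL_le sy).
apply: eq_bigr => j _; rewrite mulr_sumr; apply: eq_bigr => l _.
by rewrite (_ : j + a + (l + b) = a + b + (j + l))%N; [ring | lia].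
Qed.

End ShiftedColumns.

Section HankelTensor.
Variable R : realType.

Lemma psd_eigenvalue_ge0 N (A : 'M[R]_N) l : psd A -> eigenvalue A l -> 0 <= l.
Proof.
move=> pA /eigenvalueP[v vA v_neq0].
have : 0 < sqnorm v^T by rewrite sqnorm_gt0 // trmx_eq0.
by have := pA v^T; rewrite /sqnorm trmxK vA -scalemxAl mxE => /[swap] /pmulr_lge0 ->.
Qed.

Lemma lambda_min_rayleigh N (A : 'M[R]_N.+1) l v : A^T = A -> is_lambda_min A l ->
  l * sqnorm v <= bform A v v.
Proof.
move=> sA [_ l_min]; have [l' l'_eig l'_le] := symmetric_eigenvalue_rayleigh sA.
by apply: le_trans (l'_le v); rewrite ler_wpM2r ?sqnorm_ge0 ?l_min.
Qed.

Lemma trmx_hankel_mx m n (h : 'rV[R]_(m * (n - 1)).+1) : (hankel_mx h)^T = hankel_mx h.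
Proof. by apply/matrixP => i j; rewrite !mxE addnC. Qed.

Lemma normr_expr_even (a : R) k : ~~ odd k -> `|a| ^+ k = a ^+ k.
Proof. by move=> k_even; rewrite -normrX ger0_norm // exprn_even_ge0. Qed.

Lemma normpow_ge_term n (x : 'rV[R]_n) q i : `|x 0 i| ^+ q <= normpow x q.
Proof. by rewrite /normpow (bigD1 i) //= lerDl sumr_ge0 // => j _; rewrite exprn_ge0. Qed.

Lemma row_neq0_coord n (x : 'rV[R]_n) : x != 0 -> exists i, x 0 i != 0.
Proof.
move=> x_neq0; apply/existsP; apply: contraNT x_neq0 => /existsPn x0.
by apply/eqP/matrixP => a j; rewrite (ord1 a) mxE; apply/eqP/negPn/x0.
Qed.

Lemma normpow_gt0 n (x : 'rV[R]_n) q : x != 0 -> 0 < normpow x q.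
Proof.
move=> /row_neq0_coord[i xi_neq0].
by apply: lt_le_trans (normpow_ge_term x q i); rewrite exprn_gt0 ?normr_gt0.
Qed.

Lemma hankel_const_ge0 m n (c : R) : is_hankel_const m n c -> 0 <= c.
Proof.
case=> [[y _ <-] _]; rewrite /c_ratio.
by case: ifP => _; rewrite divr_ge0 ?norm2sq_ge0 // sumr_ge0 // => i _; rewrite exprn_ge0.
Qed.

Lemma hankel_const_le_even p n c (y : 'rV[R]_n) : is_hankel_const (p + p) n c -> y != 0 ->
  c * normpow y (p + p) <= norm2sq (convpow (vseq y) p).
Proof.
move=> [_ c_min] y_neq0; have := c_min y y_neq0.
rewrite /c_ratio oddD addbb /= divn2 addnn doubleK.
by rewrite ler_pdivlMr // normpow_gt0.
Qed.

Lemma hankel_const_le_odd p n c (y : 'rV[R]_n) : is_hankel_const (p + p).+1 n c -> y != 0 ->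
  c * normpow y (p + p) <= norm2sq (convpow (vseq y) p).
Proof.
move=> [_ c_min] y_neq0; have := c_min y y_neq0.
rewrite /c_ratio /= oddD addbb /= subn1 /= divn2 addnn doubleK.
by rewrite ler_pdivlMr // normpow_gt0.
Qed.

Lemma hankel_tensor_dot_even p n (h : 'rV[R]_((p.+1 + p.+1) * (n.+1 - 1)).+1)
    (x : 'rV[R]_n.+1) :
  \sum_i x 0 i * hankel_tensor_apply h x i =
  bform (hankel_mx h) (shift_col _ 0 (convpow (vseq x) p.+1))
                      (shift_col _ 0 (convpow (vseq x) p.+1)).
Proof.
have fits : (0 + (p.+1 * n).+1 <= ((p.+1 + p.+1) * (n.+1 - 1))./2.+1)%N by nia.
rewrite (bform_hankel_shift_col (g := hget h) _ fits fits (size_convpow x p)); last first.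
  by move=> r r'; rewrite mxE.
rewrite -sum_tuple_convpow2.
rewrite (@sum_tuple_cons _ n.+1 (p + p.+1) (fun s => hget h (ord_sum s) * coord_prod x s)).
apply: eq_bigr => i _; rewrite mulr_sumr; apply: eq_bigr => t _.
by rewrite /ord_sum /coord_prod !big_cons; ring.
Qed.

Lemma hankel_tensor_apply_odd p k (h : 'rV[R]_((p.+1 + p.+1).+1 * ((k + k).+1 - 1)).+1)
    (x : 'rV[R]_(k + k).+1) (i : 'I_(k + k).+1) a b :
  i = (a + b)%N :> nat -> (a <= k)%N -> (b <= k)%N ->
  hankel_tensor_apply h x i =
  bform (hankel_mx h) (shift_col _ a (convpow (vseq x) p.+1))
                      (shift_col _ b (convpow (vseq x) p.+1)).
Proof.
move=> i_ab a_le b_le.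
have fits c : (c <= k)%N ->
    (c + (p.+1 * (k + k)).+1 <= ((p.+1 + p.+1).+1 * ((k + k).+1 - 1))./2.+1)%N.
  by move=> c_le; nia.
rewrite (bform_hankel_shift_col (g := hget h) _ (fits a a_le) (fits b b_le) (size_convpow x p));
  last by move=> r r'; rewrite mxE.
by rewrite -i_ab -(sum_tuple_convpow2 x p p (fun s => hget h (i + s))).
Qed.

Lemma hankel_psd_H_eigenvalue_even p n (h : 'rV[R]_((p.+1 + p.+1) * (n.+1 - 1)).+1)
    c lmin lam :
  is_hankel_const (p.+1 + p.+1) n.+1 c -> psd (hankel_mx h) ->
  is_lambda_min (hankel_mx h) lmin -> H_eigenvalue h lam -> c * lmin <= lam.
Proof.
move=> hc pH lmin_min [x [x_neq0 x_eig]].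
have lmin_ge0 := psd_eigenvalue_ge0 pH lmin_min.1.
have P_gt0 := normpow_gt0 (p.+1 + p.+1) x_neq0.
have dot : \sum_i x 0 i * hankel_tensor_apply h x i = lam * normpow x (p.+1 + p.+1).
  rewrite /normpow mulr_sumr; apply: eq_bigr => i _.
  rewrite x_eig normr_expr_even ?oddD ?addbb // [in RHS](exprS (x 0 i)); ring.
rewrite -(ler_pM2r P_gt0) -dot hankel_tensor_dot_even.
apply: le_trans (lambda_min_rayleigh _ (trmx_hankel_mx h) lmin_min).
rewrite (sqnorm_shift_col _ (size_convpow x p)); last by nia.
by rewrite mulrAC mulrC ler_wpM2l // hankel_const_le_even.
Qed.

(* An odd coordinate [2a+1] pairs the shifts [a] and [a+1]; the vanishing
   coordinate [2a] makes the first of them isotropic, so Cauchy-Schwarz kills it. *)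
Lemma hankel_odd_eigenvalue_eq0 p k (h : 'rV[R]_((p.+1 + p.+1).+1 * ((k + k).+1 - 1)).+1)
    (x : 'rV[R]_(k + k).+1) lam :
  psd (hankel_mx h) -> x != 0 ->
  (forall i, hankel_tensor_apply h x i = lam * x 0 i ^+ (p.+1 + p.+1)) ->
  (forall i : 'I_(k + k).+1, ~~ odd i -> x 0 i = 0) -> lam = 0.
Proof.
move=> pH x_neq0 x_eig x_even0.
have [i xi_neq0] := row_neq0_coord x_neq0.
have i_odd : odd i by apply: contraR xi_neq0 => /x_even0 ->.
pose a := (i : nat)./2.
have i_eq : (i : nat) = (a + a.+1)%N by have := odd_double_half i; rewrite i_odd; lia.
have a_lt : (a < k)%N by have := ltn_ord i; lia.
have aa_lt : (a + a < (k + k).+1)%N by lia.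
have isotropic : bform (hankel_mx h) (shift_col _ a (convpow (vseq x) p.+1))
                                     (shift_col _ a (convpow (vseq x) p.+1)) = 0.
  rewrite -(@hankel_tensor_apply_odd p k h x (Ordinal aa_lt)) ?(ltnW a_lt) //.
  by rewrite x_eig x_even0 /= ?oddD ?addbb // expr0n mulr0.
have := psd_cauchy_schwarz (shift_col _ a (convpow (vseq x) p.+1))
          (shift_col _ a.+1 (convpow (vseq x) p.+1)) (trmx_hankel_mx h) pH.
rewrite isotropic mul0r -(hankel_tensor_apply_odd _ _ i_eq) ?x_eig ?(ltnW a_lt) //.
rewrite le_eqVlt ltNge sqr_ge0 orbF sqrf_eq0 mulf_eq0 expf_eq0 (negbTE xi_neq0) andbF orbF.
by move/eqP.
Qed.

Lemma hankel_psd_H_eigenvalue_odd p k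
    (h : 'rV[R]_((p.+1 + p.+1).+1 * ((k + k).+1 - 1)).+1) c lmin lam :
  is_hankel_const (p.+1 + p.+1).+1 (k + k).+1 c -> psd (hankel_mx h) ->
  is_lambda_min (hankel_mx h) lmin -> H_eigenvalue h lam -> c * lmin <= lam.
Proof.
move=> hc pH lmin_min [x [x_neq0 x_eig]].
set y := convpow (vseq x) p.+1.
have lmin_ge0 := psd_eigenvalue_ge0 pH lmin_min.1.
have rayleigh a : (a <= k)%N ->
    lmin * norm2sq y <= bform (hankel_mx h) (shift_col _ a y) (shift_col _ a y).
  move=> a_le; have := lambda_min_rayleigh (shift_col _ a y) (trmx_hankel_mx h) lmin_min.
  by rewrite (sqnorm_shift_col _ (size_convpow x p)) //; nia.
have [i /andP[i_even xi_neq0]|x_even0] := pickP (fun i : 'I_(k + k).+1 => ~~ odd i && (x 0 i != 0)).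
  pose a := (i : nat)./2.
  have i_eq : (i : nat) = (a + a)%N by have := odd_double_half i; rewrite (negbTE i_even); lia.
  have a_le : (a <= k)%N by have := ltn_ord i; lia.
  have X_gt0 : 0 < x 0 i ^+ (p.+1 + p.+1).
    by rewrite exprn_even_gt0 // oddD addbb.
  rewrite -(ler_pM2r X_gt0) -x_eig (hankel_tensor_apply_odd _ _ i_eq) //.
  apply: le_trans (rayleigh a a_le); rewrite mulrAC mulrC ler_wpM2l //.
  apply: le_trans (hankel_const_le_odd hc x_neq0); rewrite ler_wpM2l ?(hankel_const_ge0 hc) //.
  by rewrite -normr_expr_even ?oddD ?addbb // normpow_ge_term.
have x_even0' (i : 'I_(k + k).+1) : ~~ odd i -> x 0 i = 0.
  by move=> i_even; apply/eqP; have := x_even0 i; rewrite /= i_even => /negbFE.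
have lam0 := hankel_odd_eigenvalue_eq0 pH x_neq0 x_eig x_even0'.
have lmin_le0 : lmin <= 0.
  have := rayleigh 0%N (leq0n k).
  rewrite -(hankel_tensor_apply_odd _ _ (i := ord0)) // x_eig x_even0' //.
  by rewrite expr0n mulr0 pmulr_lle0 // norm2sq_convpow_gt0.
by rewrite lam0 mulr_ge0_le0 ?(hankel_const_ge0 hc).
Qed.

End HankelTensor.

Section HankelBounds.
Variable R : realType.

Lemma hankel_psd_H_eigenvalue_ge m n (h : 'rV[R]_(m * (n - 1)).+1) c lmin lam :
  (2 <= m)%N -> (1 <= n)%N -> ~~ odd (m * (n - 1)) -> is_hankel_const m n c ->
  psd (hankel_mx h) -> is_lambda_min (hankel_mx h) lmin -> H_eigenvalue h lam ->
  c * lmin <= lam.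
Proof.
move=> m_ge2 n_ge1 mn_even; have [n' en] : exists n', n = n'.+1 by exists n.-1; lia.
subst n; have := odd_double_half m; case: (boolP (odd m)) => m_odd m_eq.
  have [p em] : exists p, m = (p.+1 + p.+1).+1 by exists (m./2).-1; lia.
  subst m; have n'_even : ~~ odd n' by move: mn_even; rewrite oddM m_odd subn1.
  have [k en'] : exists k, n' = (k + k)%N.
    by exists n'./2; have := odd_double_half n'; rewrite (negbTE n'_even); lia.
  subst n'; exact: hankel_psd_H_eigenvalue_odd.
have [p em] : exists p, m = (p.+1 + p.+1)%N by exists (m./2).-1; lia.
subst m; exact: hankel_psd_H_eigenvalue_even.
Qed.

Lemma hankel_mxN m n (h : 'rV[R]_(m * (n - 1)).+1) : hankel_mx (- h) = - hankel_mx h.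
Proof. by apply/matrixP => i j; rewrite !mxE /hget mxE. Qed.

Lemma H_eigenvalueN m n (h : 'rV[R]_(m * (n - 1)).+1) lam :
  H_eigenvalue h lam -> H_eigenvalue (- h) (- lam).
Proof.
case=> x [x_neq0 x_eig]; exists x; split => // i.
rewrite mulNr -x_eig /hankel_tensor_apply -sumrN; apply: eq_bigr => t _.
by rewrite /hget mxE mulNr.
Qed.

Lemma eigenvalueN N (A : 'M[R]_N) a : eigenvalue (- A) (- a) = eigenvalue A a.
Proof.
apply/eigenvalueP/eigenvalueP => -[v vA v_neq0]; exists v => //.
  by apply/eqP; rewrite -eqr_opp -scaleNr -mulmxN vA.
by rewrite mulmxN vA scaleNr.
Qed.

Lemma is_lambda_maxN N (A : 'M[R]_N) l : is_lambda_max A l -> is_lambda_min (- A) (- l).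
Proof.
case=> l_eig l_max; split; first by rewrite eigenvalueN.
by move=> a; rewrite -[a]opprK eigenvalueN lerN2 => /l_max.
Qed.

Lemma nsd_psdN N (A : 'M[R]_N) : nsd A -> psd (- A).
Proof. by move=> nA v; rewrite mulmxN mulNmx mxE oppr_ge0 nA. Qed.

End HankelBounds.

Theorem theorem6 (R : realType) (m n : nat) (h : 'rV[R]_(m * (n - 1)).+1) (c : R) :
  (2 <= m)%N -> (1 <= n)%N -> ~~ odd (m * (n - 1)) ->
  is_hankel_const m n c ->
  (psd (hankel_mx h) ->
     forall lmin, is_lambda_min (hankel_mx h) lmin ->
     forall lam, H_eigenvalue h lam -> c * lmin <= lam) /\
  (nsd (hankel_mx h) ->
     forall lmax, is_lambda_max (hankel_mx h) lmax ->
     forall lam, H_eigenvalue h lam -> lam <= c * lmax).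
Proof.
move=> m_ge2 n_ge1 mn_even hc; split=> [|nH lmax lmax_max lam lam_eig].
  by move=> pH lmin lmin_min lam; exact: hankel_psd_H_eigenvalue_ge.
rewrite -lerN2 -mulrN; apply: (hankel_psd_H_eigenvalue_ge (h := - h)) => //.
- by rewrite hankel_mxN; apply: nsd_psdN.
- by rewrite hankel_mxN; apply: is_lambda_maxN.
- exact: H_eigenvalueN.
Qed.
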